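(* The set $\mathbb{I}$ of intervals of $\mathbb{F}$ is closed under intersections: if $I,J\in\mathbb{I}$ then $I\cap J\in\mathbb{I}$.
   Context: $\mathbb{F}$ is the free group on generators $a,b$ with identity $e$. For $n=4k+i$ with $k\in\mathbb{N}$ and $0\le i<4$, set $\ell_n=a,a^{-1},b,b^{-1}$ according as $i=0,1,2,3$. For $g\in\mathbb{F}$ and $S\subseteq\mathbb{F}$ let $gS=\{gs:s\in S\}$. Define $I_0=\{e\}$ and $I_{n+1}=I_n\cup\ell_nI_n$. An interval of $\mathbb{F}$ is either the empty set or a set of the form $wI_n$ with $w\in\mathbb{F}$, $n\in\mathbb{N}$; $\mathbb{I}$ denotes the set of intervals. *)

(* The free group F(a,b) is modelled concretely as the type of
   freely reduced words over the alphabet {a, a^-1, b, b^-1}. *)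
From HB Require Import structures.
From mathcomp Require Import all_boot.
Set Implicit Arguments. Unset Strict Implicit. Unset Printing Implicit Defensive.

Inductive gen := Ga | Gai | Gb | Gbi.

Definition gen_eqb (x y : gen) : bool :=
  match x, y with
  | Ga, Ga | Gai, Gai | Gb, Gb | Gbi, Gbi => true
  | _, _ => false
  end.

Lemma gen_eqP : Equality.axiom gen_eqb.
Proof. by case; case; constructor. Qed.

HB.instance Definition _ := hasDecEq.Build gen gen_eqP.

Definition gen_inv (x : gen) : gen :=
  match x with Ga => Gai | Gai => Ga | Gb => Gbi | Gbi => Gb end.

Fixpoint reduced (s : seq gen) : bool :=
  match s with
  | x :: ((y :: _) as t) => (y != gen_inv x) && reduced t
  | _ => true
  end.

Definition push (x : gen) (w : seq gen) : seq gen :=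
  match w with
  | y :: w' => if y == gen_inv x then w' else x :: w
  | [::] => [:: x]
  end.

Lemma reduced_behead (w : seq gen) : reduced w -> reduced (behead w).
Proof. by case: w => [|x [|y w]] //= /andP []. Qed.

Lemma push_reduced x w : reduced w -> reduced (push x w).
Proof.
case: w => [|y w] // Hw; rewrite /push.
case: ifP => Hy; first exact: (reduced_behead Hw).
by rewrite [reduced _]/= Hy; exact: Hw.
Qed.

Lemma foldr_push_reduced (u v : seq gen) :
  reduced v -> reduced (foldr push v u).
Proof. by elim: u => [|x u IH] //= Hv; apply: push_reduced; apply: IH. Qed.

Record FG := MkFG { fg_word :> seq gen; fg_red : reduced fg_word }.

Definition fg_e : FG := @MkFG [::] isT.

Definition fg_mul (u v : FG) : FG :=
  @MkFG (foldr push (fg_word v) (fg_word u)) (foldr_push_reduced u (fg_red v)).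

Definition fg_letter (x : gen) : FG := @MkFG [:: x] isT.

Definition fset := FG -> Prop.

Definition ell (n : nat) : FG :=
  fg_letter (match n %% 4 with 0 => Ga | 1 => Gai | 2 => Gb | _ => Gbi end).

Definition lmul (g : FG) (S : fset) : fset :=
  fun x => exists2 s, S s & x = fg_mul g s.

Definition fset_union (S T : fset) : fset := fun x => S x \/ T x.
Definition fset_inter (S T : fset) : fset := fun x => S x /\ T x.
Definition fset_eq (S T : fset) : Prop := forall x, S x <-> T x.

Fixpoint Iset (n : nat) : fset :=
  match n with
  | 0 => fun x => x = fg_e
  | n'.+1 => fset_union (Iset n') (lmul (ell n') (Iset n'))
  end.

Definition is_interval (S : fset) : Prop :=
  (forall x, ~ S x) \/ exists (w : FG) (n : nat), fset_eq S (lmul w (Iset n)).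

(* Membership in I_n is governed by a depth function on reduced words: x lies in
   I_n iff depth x <= n, so w I_n is a "ball" B(w, n).  Intersections of two balls
   are treated by induction on the sum of the radii, using
   B(w, n+1) = B(w, n) ∪ B(w l_n, n).  If B(v, m), m <= n+1, meets both
   B(w, n+1) \ B(w, n) and B(w, n+1) \ B(w l_n, n), then reducedness forces
   v = w and the intersection is B(w, n+1); otherwise it is the intersection of
   B(v, m) with one of the two smaller balls. *)

From Stdlib Require Import Classical.
From mathcomp Require Import all_boot zify.
Set Implicit Arguments. Unset Strict Implicit. Unset Printing Implicit Defensive.

Lemma gen_invK : involutive gen_inv. Proof. by case. Qed.

Lemma reducedE (s : seq gen) : reduced s = sorted (fun x y => y != gen_inv x) s.
Proof.
elim: s => [|x [|y s] IH] //.
by rewrite -[reduced _]/((y != gen_inv x) && reduced (y :: s)) IH.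
Qed.

Definition winv (u : seq gen) : seq gen := rev (map gen_inv u).

Lemma winv_cons z u : winv (z :: u) = winv u ++ [:: gen_inv z].
Proof. by rewrite /winv /= rev_cons cats1. Qed.

Lemma winv_reduced u : reduced u -> reduced (winv u).
Proof.
rewrite !reducedE /winv rev_sorted sorted_map (@eq_sorted _ _ (fun x y => y != gen_inv x)) //.
by case; case.
Qed.

Lemma reduced_cons x s : reduced (x :: s) = (ohead s != Some (gen_inv x)) && reduced s.
Proof. by case: s => [|y s] //=; rewrite (inj_eq Some_inj). Qed.

Lemma push_cancel x s : push x (gen_inv x :: s) = s.
Proof. by rewrite /= eqxx. Qed.

Lemma push_cons x s : ohead s != Some (gen_inv x) -> push x s = x :: s.
Proof. by case: s => [|y s] //=; rewrite (inj_eq Some_inj) => /negbTE ->. Qed.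

Lemma push_pushV x s : reduced s -> push x (push (gen_inv x) s) = s.
Proof.
case: s => [|y s] Hs /=; first by rewrite /= eqxx.
rewrite gen_invK; case: eqVneq Hs => [-> Hs|_ _]; last exact: push_cancel.
by apply: push_cons; move: Hs; rewrite reduced_cons => /andP [].
Qed.

Lemma foldr_push_pushC w x z : reduced w ->
  foldr push w (push x z) = push x (foldr push w z).
Proof.
move=> Hw; case: z => [|y z] //=; case: ifP => [/eqP ->|] //=.
by rewrite push_pushV //; exact: foldr_push_reduced.
Qed.

Lemma fg_ext (u v : FG) : fg_word u = fg_word v -> u = v.
Proof.
case: u v => [u pu] [v pv] /= Euv; subst v.
by rewrite (bool_irrelevance pu pv).
Qed.

Definition fg_inv (w : FG) : FG := @MkFG (winv w) (winv_reduced (fg_red w)).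

Lemma fg_mulA u v w : fg_mul (fg_mul u v) w = fg_mul u (fg_mul v w).
Proof.
apply: fg_ext; case: u v w => [u _] [v Hv] [w Hw] /=.
by elim: u => [|x u IH] //=; rewrite foldr_push_pushC ?IH //; apply: foldr_push_reduced.
Qed.

Lemma fg_mul1 w : fg_mul w fg_e = w.
Proof.
apply: fg_ext; case: w => [w Hw] /=.
elim: w Hw => [|x w IH] //; rewrite reduced_cons => /andP [Hx Hw] /=.
by rewrite IH // push_cons.
Qed.

Lemma fg_mulVK w x : fg_mul (fg_inv w) (fg_mul w x) = x.
Proof.
apply: fg_ext; case: w x => [w _] [x Hx] /=.
elim: w => [|z w IH] //=; rewrite winv_cons foldr_cat /=.
rewrite -[X in push X (foldr _ _ _)]gen_invK push_pushV //.
exact: foldr_push_reduced.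
Qed.

Lemma fg_mulKV w x : fg_mul w (fg_mul (fg_inv w) x) = x.
Proof.
apply: fg_ext; case: w x => [w _] [x Hx] /=.
elim: w x Hx => [|z w IH] x Hx //=.
by rewrite winv_cons foldr_cat /= IH ?push_pushV //; apply: push_reduced.
Qed.

Lemma lmulP g (S : fset) x : lmul g S x <-> S (fg_mul (fg_inv g) x).
Proof.
split; first by case=> s Hs ->; rewrite fg_mulVK.
by move=> Hx; exists (fg_mul (fg_inv g) x); rewrite ?fg_mulKV.
Qed.

Lemma lmul_mul g h (S : fset) : fset_eq (lmul (fg_mul g h) S) (lmul g (lmul h S)).
Proof.
move=> x; split; first by case=> s Hs ->; exists (fg_mul h s); [exists s | rewrite fg_mulA].
by case=> _ [s Hs ->] ->; exists s; rewrite ?fg_mulA.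
Qed.

Definition rank (c : gen) : nat :=
  match c with Ga => 0 | Gai => 1 | Gb => 2 | Gbi => 3 end.

Definition ell_gen (n : nat) : gen :=
  match n %% 4 with 0 => Ga | 1 => Gai | 2 => Gb | _ => Gbi end.

Lemma ell_genP n c : (ell_gen n == c) = (n %% 4 == rank c).
Proof.
rewrite /ell_gen; have : n %% 4 < 4 by rewrite ltn_pmod.
by case: (n %% 4) => [|[|[|[|k]]]] //; case: c.
Qed.

Lemma gen_inv_neq c : gen_inv c != c. Proof. by case: c. Qed.

Definition level_step (c : gen) (p : nat) : nat := p.+1 + (rank c + 3 * p) %% 4.

(* [depth s] is the least [n] with [s] in [I_n] (lemma [Iset_depth]): reading [s]
   from the right, each letter [c] moves the level [p] up to the least [q > p]
   with [l_(q-1) = c]. *)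
Definition depth (s : seq gen) : nat := foldr level_step 0 s.

Lemma depth_cons_gt z s : depth s < depth (z :: s).
Proof. by rewrite /= /level_step; lia. Qed.

Lemma depth_cons_head z s n : depth (z :: s) = n.+1 -> z = ell_gen n.
Proof.
rewrite /= /level_step => Hn; apply/esym/eqP; rewrite ell_genP.
by case: z Hn => /=; lia.
Qed.

Lemma depth_cons_le z s q : depth s <= q -> z = ell_gen q -> depth (z :: s) <= q.+1.
Proof.
move=> Hq /esym/eqP; rewrite ell_genP /= /level_step.
by case: z => /= /eqP; lia.
Qed.

Lemma depth_catl l s : depth s <= depth (l ++ s).
Proof. by elim: l => //= z l IH; rewrite (leq_trans IH) // ltnW // depth_cons_gt. Qed.

Lemma depth_le_succ n s :
  depth s <= n.+1 <-> depth s <= n \/ depth (push (gen_inv (ell_gen n)) s) <= n.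
Proof.
set c := ell_gen n; split=> [Hs|].
  case: (leqP (depth s) n) => [|Hn]; [by left | right].
  case: s Hs Hn => [//|z s] Hs Hn.
  have Ez : z = c by apply: (@depth_cons_head z s); lia.
  by rewrite Ez /= gen_invK eqxx -ltnS (leq_trans (depth_cons_gt z s)).
case=> [/leqW //|]; case: s => [//|z s] /=; rewrite gen_invK.
case: eqVneq => [-> Hs|_ Hs]; first exact: depth_cons_le.
exact: leqW (ltnW (leq_trans (depth_cons_gt _ _) Hs)).
Qed.

Lemma Iset_depth n (x : FG) : Iset n x <-> depth x <= n.
Proof.
elim: n x => [|n IH] x.
  split=> [-> //|]; case: x => [[|z s] Hx] Hd; first exact: fg_ext.
  by have := depth_cons_gt z s; rewrite leqn0 in Hd; rewrite (eqP Hd).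
by rewrite /= /fset_union lmulP !IH depth_le_succ; exact: iff_refl.
Qed.

Lemma ball_depth w n x : lmul w (Iset n) x <-> depth (fg_mul (fg_inv w) x) <= n.
Proof. by rewrite lmulP Iset_depth. Qed.

Lemma ball_le w m n x : m <= n -> lmul w (Iset m) x -> lmul w (Iset n) x.
Proof. by move=> Hmn; rewrite !ball_depth => /leq_trans; apply. Qed.

Lemma ball_succ w n x :
  lmul w (Iset n.+1) x <-> lmul w (Iset n) x \/ lmul (fg_mul w (ell n)) (Iset n) x.
Proof. by rewrite lmul_mul !lmulP [Iset _ _]/= /fset_union lmulP. Qed.

Lemma mulV_cons_nocancel z u s : reduced (z :: u) -> ohead s != Some z ->
  foldr push s (winv (z :: u)) = winv u ++ gen_inv z :: s.
Proof.
elim: u z s => [|y u IH] z s; first by move=> _ Hs; rewrite /= push_cons ?gen_invK.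
rewrite reduced_cons => /andP [Hy Hu] Hs.
rewrite winv_cons foldr_cat /= push_cons ?gen_invK // IH ?winv_cons -?catA //.
by rewrite eq_sym.
Qed.

Lemma depth_push_ell_inv n s :
  depth s <= n.+1 -> n < depth (push (gen_inv (ell_gen n)) s) ->
  ohead s != Some (ell_gen n) /\ n.+1 < depth (gen_inv (ell_gen n) :: s).
Proof.
set c := ell_gen n => Hs Hp.
have Hsc : ohead s != Some c.
  case: s Hs Hp => [|z s] // Hs Hp; apply/negP => /eqP [Ez]; subst z.
  by move: Hp; rewrite /= gen_invK eqxx; have := depth_cons_gt c s; lia.
split=> //; move: Hp; rewrite push_cons ?gen_invK // => Hp.
rewrite ltn_neqAle Hp andbT; apply/eqP => /esym/depth_cons_head.
exact/eqP/gen_inv_neq.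
Qed.

Lemma mulV_Iset_pair_trivial n m (x y u : FG) : m <= n.+1 ->
  depth x = n.+1 -> depth y <= n.+1 -> n < depth (push (gen_inv (ell_gen n)) y) ->
  depth (fg_mul (fg_inv u) x) <= m -> depth (fg_mul (fg_inv u) y) <= m -> u = fg_e.
Proof.
(* x starts with c = l_n and y does not; if u starts with z, then u^-1 y (when z = c)
   or u^-1 x (when z <> c) is reduced and ends with a suffix of depth > n + 1. *)
set c := ell_gen n => Hm Hx Hy Hyc Hux Huy.
have [Hyc0 Hyc1] := depth_push_ell_inv Hy Hyc; rewrite -/c in Hyc0 Hyc1.
case: u Hux Huy => [[|z u] Hu] /= Hux Huy; first exact: fg_ext.
exfalso; case: (eqVneq z c) => [Ez|Hz].
  move: Huy; rewrite Ez in Hu *; rewrite mulV_cons_nocancel //.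
  by have := depth_catl (winv u) (gen_inv c :: y); lia.
have [x' Ex] : exists x', fg_word x = c :: x'.
  case: x Hx {Hux} => [[|z' x'] _] //= Hx.
  by exists x'; rewrite (depth_cons_head Hx).
have Hxz : ohead x != Some z by rewrite Ex /= (inj_eq Some_inj) eq_sym.
move: Hux; rewrite mulV_cons_nocancel //.
by have := depth_catl (winv u) (gen_inv z :: x); have := depth_cons_gt (gen_inv z) x; lia.
Qed.

Lemma ball_split_center n m w v x y : m <= n.+1 ->
  lmul w (Iset n.+1) x -> lmul v (Iset m) x ->
  lmul w (Iset n.+1) y -> lmul v (Iset m) y ->
  ~ lmul w (Iset n) x -> ~ lmul (fg_mul w (ell n)) (Iset n) y -> v = w.
Proof.
rewrite -[v](fg_mulKV w); set u := fg_mul (fg_inv w) v.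
rewrite !lmul_mul !(lmulP w) !ball_depth !Iset_depth => Hm Hwx Hvx Hwy Hvy Hx Hy.
rewrite (@mulV_Iset_pair_trivial n m _ _ u Hm _ Hwy _ Hvx Hvy) ?fg_mul1 //; first lia.
by rewrite ltnNge; apply/negP.
Qed.

Lemma is_interval_eq (A B : fset) : fset_eq A B -> is_interval B -> is_interval A.
Proof.
move=> AB [B0|[w [n Bw]]]; first by left=> x /AB /B0.
by right; exists w, n => x; rewrite AB Bw.
Qed.

Lemma fset_inter_shrinkl (A A' B : fset) :
  (forall x, A' x -> A x) -> (forall x, fset_inter A B x -> A' x) ->
  fset_eq (fset_inter A B) (fset_inter A' B).
Proof.
move=> A'A sub x; split=> [ABx|[/A'A Ax Bx]]; last by split.
by split; [exact: sub | case: ABx].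
Qed.

Lemma is_interval_inter_balls w n v m :
  is_interval (fset_inter (lmul w (Iset n)) (lmul v (Iset m))).
Proof.
have [k] := ubnP (n + m); elim: k => // k IH in w n v m *; rewrite ltnS => Hk.
wlog Hmn : w n v m Hk / m <= n.
  move=> Hwlog; case: (leqP m n) => [|/ltnW Hnm]; first exact: Hwlog.
  apply: (@is_interval_eq _ (fset_inter (lmul v (Iset m)) (lmul w (Iset n)))).
    by move=> x; split; case.
  by apply: Hwlog; rewrite // addnC.
case: n Hk Hmn => [|n] Hk Hmn.
  move: Hmn; rewrite leqn0 => /eqP ->.
  case: (classic (w = v)) => [<-|Hwv].
    by right; exists w, 0 => x; split=> [[]|] // Hx; split.
  by left=> x [[_ -> ->] [_ ->]]; rewrite !fg_mul1.
set X := fset_inter _ _.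
case: (classic (forall x, X x -> lmul w (Iset n) x)) =>
    [Hsub|/not_all_ex_not [x /(imply_to_and (X x)) [[Hwx Hvx] Hx]]].
  apply: is_interval_eq (fset_inter_shrinkl _ Hsub) _.
    by move=> x Hx; apply/ball_succ; left.
  by apply: IH; rewrite addSn in Hk.
case: (classic (forall y, X y -> lmul (fg_mul w (ell n)) (Iset n) y)) =>
    [Hsub|/not_all_ex_not [y /(imply_to_and (X y)) [[Hwy Hvy] Hy]]].
  apply: is_interval_eq (fset_inter_shrinkl _ Hsub) _.
    by move=> y Hy; apply/ball_succ; right.
  by apply: IH; rewrite addSn in Hk.
have Evw := ball_split_center Hmn Hwx Hvx Hwy Hvy Hx Hy; subst v.
have Hnm : n < m by rewrite ltnNge; apply/negP => Hmn'; exact/Hx/(ball_le Hmn').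
by right; exists w, n.+1 => z; split=> [[] //|Hz]; split=> //; exact: ball_le Hz.
Qed.

Theorem proposition2p6 (I J : fset) :
  is_interval I -> is_interval J -> is_interval (fset_inter I J).
Proof.
case=> [I0|[w [n Iw]]]; first by move=> _; left=> x [/I0].
case=> [J0|[v [m Jv]]]; first by left=> x [_ /J0].
apply: is_interval_eq (is_interval_inter_balls w n v m).
by move=> x; rewrite /fset_inter Iw Jv.
Qed.
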